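(* Let $P=\bigcap_{j=1}^m\{\mathbf{u}\in\mathbb{R}^n:\langle\mathbf{u},\mathbf{v}_j\rangle-\lambda_j\ge0\}$ be an $n$-dimensional polytope in $\mathbb{R}^n$. If $\mathbf{u}\notin\mathrm{Trop}(P,\mathbf{m})$ for some lattice point $\mathbf{m}\in\mathbb{Z}^n$, then there exists a primitive lattice point $\widetilde{\mathbf{m}}\in\mathbb{Z}^n$ orthogonal to an $(n-1)$-dimensional subspace of $\mathbb{R}^n$ spanned by facet normal vectors $\mathbf{v}_j$ such that $\mathbf{u}\notin\mathrm{Trop}(P,\widetilde{\mathbf{m}})$.
   Context: The description of $P$ is non-redundant (each half-space bounds a distinct facet) and the inward normals $\mathbf{v}_j\in\mathbb{Z}^n$ are primitive; $\ell_j(\mathbf{u})=\langle\mathbf{u},\mathbf{v}_j\rangle-\lambda_j$. For $\mathbf{m}\in\mathbb{Z}^n$, $\mathrm{Trop}(P,\mathbf{m})$ is the non-differentiable locus of $\mathbf{u}\mapsto\min\{\ell_j(\mathbf{u}):\langle\mathbf{m},\mathbf{v}_j\rangle\neq0\}$, equivalently the set of $\mathbf{u}$ at which this minimum is attained by at least two distinct indices $j$ with $\langle\mathbf{m},\mathbf{v}_j\rangle\ne0$; $\mathrm{Trop}(P,\mathbf{0})=\mathbb{R}^n$. *)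

From HB Require Import structures.
From mathcomp Require Import all_boot all_order all_algebra.
From mathcomp Require Import reals.
Set Implicit Arguments. Unset Strict Implicit. Unset Printing Implicit Defensive.
Import Order.TTheory GRing.Theory Num.Theory.
Local Open Scope ring_scope.

Section Defs.
Variables (R : realType) (n m : nat).
Variables (v : 'I_m -> 'rV[int]_n) (lam : 'I_m -> R).

Definition dotR (u : 'rV[R]_n) (w : 'rV[int]_n) : R :=
  \sum_(i < n) u 0 i * (w 0 i)%:~R.

Definition dotZ (a b : 'rV[int]_n) : int := \sum_(i < n) a 0 i * b 0 i.

Definition ell (j : 'I_m) (u : 'rV[R]_n) : R := dotR u (v j) - lam j.

Definition inP (u : 'rV[R]_n) : Prop := forall j, 0 <= ell j u.

Definition inTrop (mm : 'rV[int]_n) (u : 'rV[R]_n) : Prop :=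
  if mm == 0 then True else
  exists j k : 'I_m, [/\ j != k, dotZ mm (v j) != 0, dotZ mm (v k) != 0,
     ell j u = ell k u &
     forall i, dotZ mm (v i) != 0 -> ell j u <= ell i u].

Definition normal_mx : 'M[R]_(m, n) := \matrix_(j, i) ((v j) 0 i)%:~R.

Definition normal_span (J : {set 'I_m}) : 'M[R]_n :=
  (\sum_(j in J) <<row j normal_mx>>)%MS.
End Defs.

Definition primitive (n : nat) (w : 'rV[int]_n) : Prop :=
  w != 0 /\ forall d : int, (forall i : 'I_n, (d %| w ord0 i)%Z) -> `|d| = 1.

(* The normals v_j span R^n, since P is bounded and has an interior point.  As
   u is not in Trop(P, m), some j0 is the unique minimiser of l_j(u) among the j
   with <m, v_j> <> 0.  The normals v_j with j <> j0 and l_j(u) <= l_j0(u) are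
   orthogonal to m, so they do not span v_j0; a maximal family of normals
   containing them and still avoiding v_j0 spans a hyperplane H.  Working over Q,
   H has a normal vector that can be scaled to a primitive integral one m'.  Then
   <m', v_j0> <> 0 while every competitor of j0 lies in H, so j0 is again the
   unique minimiser for m'. *)

From HB Require Import structures.
From mathcomp Require Import all_boot all_order all_algebra.
From mathcomp Require Import reals.
From mathcomp Require Import lra zify.
Set Implicit Arguments. Unset Strict Implicit. Unset Printing Implicit Defensive.
Import Order.TTheory GRing.Theory Num.Theory.
Local Open Scope ring_scope.

Lemma row_neq0P (R : nmodType) n (w : 'rV[R]_n) : reflect (exists i, w 0 i != 0) (w != 0).
Proof.
apply: (iffP idP) => [w0 | [i]]; last by apply: contraNneq => ->; rewrite mxE.
apply/existsP; apply: contraNT w0 => /existsPn w0; apply/eqP/rowP => i.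
by rewrite mxE; apply/eqP/negPn/w0.
Qed.

Section Orthogonality.
Variables (F : fieldType) (n : nat).

Lemma sub_kermx_trP (a w : 'rV[F]_n) : (a <= kermx w^T)%MS = ((a *m w^T) 0 0 == 0).
Proof.
rewrite sub_kermx; apply/eqP/eqP => [-> | a_w]; first by rewrite mxE.
by apply/matrixP => i j; rewrite !ord1 a_w mxE.
Qed.

Lemma sub_kermx_trZ k (A : 'M[F]_(k, n)) (c : F) (w : 'rV[F]_n) :
  c != 0 -> (A <= kermx (c *: w)^T)%MS = (A <= kermx w^T)%MS.
Proof. by move=> c0; rewrite !sub_kermx linearZ /= -scalemxAr scaler_eq0 (negbTE c0). Qed.

Lemma full_rank_sub_kermx_tr k (A : 'M[F]_(k, n)) (w : 'rV[F]_n) :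
  \rank A = n -> (A <= kermx w^T)%MS -> w = 0.
Proof.
move=> rankA /mxrankS; rewrite rankA mxrank_ker mxrank_tr => le_n.
apply/eqP; rewrite -mxrank_eq0; have := rank_leq_col w; lia.
Qed.

Lemma exists_nz_sub_kermx_tr k (A : 'M[F]_(k, n)) :
  (\rank A < n)%N -> exists2 d : 'rV[F]_n, d != 0 & (A <= kermx d^T)%MS.
Proof.
move=> rankA; set d := nz_row (kermx A^T); exists d.
  by rewrite nz_row_eq0 -mxrank_eq0 mxrank_ker mxrank_tr subn_eq0 -ltnNge.
apply/sub_kermxP/trmx_inj; rewrite trmx_mul trmxK trmx0.
exact/sub_kermxP/nz_row_sub.
Qed.

Lemma mxrank_adds_row_leq k (B : 'M[F]_(k, n)) (a : 'rV[F]_n) :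
  (\rank (B + a) <= (\rank B).+1)%N.
Proof.
rewrite (leq_trans (mxrank_adds_leqif B a)) //.
by rewrite -[(\rank B).+1]addn1 leq_add2l rank_leq_row.
Qed.

Lemma mxrank_adds_notin k (B : 'M[F]_(k, n)) (a : 'rV[F]_n) :
  ~~ (a <= B)%MS -> \rank (B + a) = (\rank B).+1.
Proof.
move=> aB; apply/eqP; rewrite eqn_leq mxrank_adds_row_leq /=.
have: (B < B + a)%MS by rewrite ltmxE addsmxSl (contra (submx_trans (addsmxSr B a))).
by rewrite ltmxErank => /andP[].
Qed.

Lemma steinitz_exchange k (B : 'M[F]_(k, n)) (a c : 'rV[F]_n) :
  ~~ (a <= B)%MS -> (a <= B + c)%MS -> (c <= B + a)%MS.
Proof.
move=> aB aBc; have sBa : (B + a <= B + c)%MS by rewrite addsmx_sub addsmxSl.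
have sBca : (B + c <= B + a)%MS.
  rewrite -(mxrank_leqif_sup sBa).2 eqn_leq (mxrankS sBa) (mxrank_adds_notin aB).
  exact: mxrank_adds_row_leq.
exact: submx_trans (addsmxSr B c) sBca.
Qed.

Lemma hyperplane_normal k (B : 'M[F]_(k, n)) (a : 'rV[F]_n) :
  \rank B = n.-1 -> ~~ (a <= B)%MS ->
  exists2 w : 'rV[F]_n, (B <= kermx w^T)%MS & ~~ (a <= kermx w^T)%MS.
Proof.
move=> rankB aB; have rank_Ba := mxrank_adds_notin aB.
have rankB_lt : (\rank B < n)%N by rewrite -rank_Ba rank_leq_col.
have [w w0 Bw] := exists_nz_sub_kermx_tr rankB_lt.
exists w => //; apply: contra w0 => aw; apply/eqP.
apply: (full_rank_sub_kermx_tr (A := (B + a)%MS)); last by rewrite addsmx_sub Bw.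
by rewrite rank_Ba rankB prednK // (leq_ltn_trans _ rankB_lt).
Qed.

End Orthogonality.

Section RowSpan.
Variables (F : fieldType) (m n : nat) (N : 'M[F]_(m, n)).

Definition row_span (J : {set 'I_m}) : 'M[F]_n := (\sum_(j in J) <<row j N>>)%MS.

Lemma row_sub_span (J : {set 'I_m}) j : j \in J -> (row j N <= row_span J)%MS.
Proof. by move=> jJ; rewrite -genmxE (sumsmx_sup j). Qed.

Lemma row_span_subP (J : {set 'I_m}) k (B : 'M[F]_(k, n)) :
  reflect (forall j, j \in J -> (row j N <= B)%MS) (row_span J <= B)%MS.
Proof. by apply: (iffP sumsmx_subP) => sJB j /sJB; rewrite genmxE. Qed.

Lemma row_span_setU1 (J : {set 'I_m}) k : (row_span (k |: J) :=: row_span J + row k N)%MS.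
Proof.
apply/eqmxP/andP; split.
  apply/row_span_subP => j /setU1P[-> | jJ]; first exact: addsmxSr.
  exact: submx_trans (row_sub_span jJ) (addsmxSl _ _).
rewrite addsmx_sub row_sub_span ?setU11 // andbT.
by apply/row_span_subP => j jJ; rewrite row_sub_span // setU1r.
Qed.

Lemma extend_to_hyperplane (T : {set 'I_m}) (j0 : 'I_m) :
  \rank N = n -> ~~ (row j0 N <= row_span T)%MS ->
  exists J : {set 'I_m},
    [/\ T \subset J, \rank (row_span J) = n.-1 & ~~ (row j0 N <= row_span J)%MS].
Proof.
move=> rankN j0T.
pose avoids (J : {set 'I_m}) := (T \subset J) && ~~ (row j0 N <= row_span J)%MS.
have avoidsT : avoids T by rewrite /avoids subxx.
have [J /andP[TJ j0J] Jmax] := arg_maxnP (fun J : {set 'I_m} => #|J|) avoidsT.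
have spanN : (N <= row_span J + row j0 N)%MS.
  apply/row_subP => k; apply: contraT => kJj0.
  have kJ : k \notin J.
    by apply: contra kJj0 => /row_sub_span/submx_trans; apply; apply: addsmxSl.
  have : avoids (k |: J).
    rewrite /avoids (subset_trans TJ (subsetUr _ _)) /= row_span_setU1.
    by apply: contra kJj0; apply: steinitz_exchange.
  by move/Jmax; rewrite cardsU1 kJ /= ltnn.
have : \rank (row_span J + row j0 N) = n.
  by apply/eqP; rewrite eqn_leq rank_leq_col -{1}rankN mxrankS.
by rewrite mxrank_adds_notin // => /(congr1 predn) rankJ; exists J.
Qed.

End RowSpan.

Lemma map_row_span (F K : fieldType) (f : {rmorphism F -> K}) m n
    (N : 'M[F]_(m, n)) (J : {set 'I_m}) :
  (map_mx f (row_span N J) :=: row_span (map_mx f N) J)%MS.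
Proof.
apply/eqmxP; rewrite /row_span.
apply: (big_ind2 (fun (X : 'M_n) Y => (map_mx f X == Y)%MS)) => [|X1 X2 Y1 Y2|j _].
- by rewrite map_mx0 submx_refl.
- move=> /eqmxP eqX /eqmxP eqY; apply/eqmxP.
  exact: eqmx_trans (map_addsmx f X1 Y1) (adds_eqmx eqX eqY).
- by apply/eqmxP; rewrite -map_row; apply: map_genmx.
Qed.

Section Polytope.
Variables (R : realType) (n m : nat) (v : 'I_m -> 'rV[int]_n) (lam : 'I_m -> R).

Lemma dotRDl (a b : 'rV[R]_n) w : dotR (a + b) w = dotR a w + dotR b w.
Proof. by rewrite /dotR -big_split; apply: eq_bigr => i _; rewrite mxE mulrDl. Qed.

Lemma dotRZl (t : R) (a : 'rV[R]_n) w : dotR (t *: a) w = t * dotR a w.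
Proof. by rewrite /dotR mulr_sumr; apply: eq_bigr => i _; rewrite mxE mulrA. Qed.

Lemma row_normal_mx_mul_tr (d : 'rV[R]_n) j :
  (row j (normal_mx R v) *m d^T) 0 0 = dotR d (v j).
Proof. by rewrite mxE; apply: eq_bigr => i _; rewrite !mxE mulrC. Qed.

Lemma inP_translate (u d : 'rV[R]_n) (t : R) :
  (forall j, dotR d (v j) = 0) -> inP v lam u -> inP v lam (u + t *: d).
Proof. by move=> d_orth Pu j; have := Pu j; rewrite /ell dotRDl dotRZl d_orth mulr0 addr0. Qed.

Lemma rank_normal_mx (u0 : 'rV[R]_n) :
  (exists M : R, forall u, inP v lam u -> forall i, `|u 0 i| <= M) ->
  inP v lam u0 -> \rank (normal_mx R v) = n.
Proof.
move=> [M P_bounded] Pu0; apply/eqP; rewrite eqn_leq rank_leq_col leqNgt; apply/negP.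
move=> /exists_nz_sub_kermx_tr[d d0 Nd].
have d_orth j : dotR d (v j) = 0.
  by apply/eqP; rewrite -row_normal_mx_mul_tr -sub_kermx_trP (submx_trans (row_sub _ _) Nd).
have /row_neq0P[i di] := d0.
pose t := (M + `|u0 0 i| + 1) / d 0 i.
have := P_bounded _ (inP_translate t d_orth Pu0) i; rewrite !mxE /t divfK //.
have := ler_norm (u0 0 i + (M + `|u0 0 i| + 1)); have := ler_norm (- u0 0 i).
rewrite normrN; lra.
Qed.

End Polytope.

Section PrimitiveVectors.
Variable n : nat.

Lemma clear_denominators (w : 'rV[rat]_n) :
  exists2 D : int, D != 0 & exists z : 'rV[int]_n, map_mx intr z = D%:~R *: w.
Proof.
exists (\prod_i denq (w 0 i)); first by apply/prodf_neq0 => i _; apply: denq_neq0.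
exists (\row_i (numq (w 0 i) * \prod_(k | k != i) denq (w 0 k))).
apply/rowP => i; rewrite !mxE [in RHS](bigD1 i) //= !intrM numqE.
by rewrite [RHS]mulrC mulrA.
Qed.

Lemma primitive_part (z : 'rV[int]_n) :
  z != 0 -> exists2 g : int, g != 0 & exists2 mt, primitive mt & z = g *: mt.
Proof.
move=> /row_neq0P[i0 zi0]; pose g := \big[gcdn/0%N]_i absz (z 0 i).
have g_dvd i : dvdn g (absz (z 0 i)) by apply: (biggcdn_inf i).
have g0 : (0 < g)%N.
  by rewrite lt0n; apply: contraNneq zi0 => g0; move: (g_dvd i0); rewrite g0 dvd0n absz_eq0.
pose mt := \row_i divz (z 0 i) g.
have mtE i : z 0 i = g%:Z * mt 0 i by rewrite mxE mulrC divzK // dvdzE g_dvd.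
exists g%:Z; first by rewrite -lt0n.
  exists mt; last by apply/rowP => i; rewrite mxE mtE.
split.
  by apply/row_neq0P; exists i0; apply: contraNneq zi0; rewrite mtE => ->; rewrite mulr0.
move=> d d_dvd; have dg_dvd : (`|d| * g %| g)%N.
  apply/dvdn_biggcdP => i _; rewrite mtE abszM mulnC dvdn_pmul2l //.
  exact: d_dvd.
have : (`|d| %| 1)%N by rewrite -(dvdn_pmul2r g0) mul1n.
by rewrite dvdn1 -abszE => /eqP ->.
Qed.

Lemma exists_primitive_multiple (w : 'rV[rat]_n) : w != 0 ->
  exists2 mt : 'rV[int]_n, primitive mt & exists2 c : rat, c != 0 & map_mx intr mt = c *: w.
Proof.
move=> w0; have [D D0 [z zE]] := clear_denominators w.
have [|g g0 [mt mtP mtE]] := primitive_part (z := z).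
  apply: contraNneq w0 => z0; move: zE; rewrite z0 map_mx0 => /esym/eqP.
  by rewrite scaler_eq0 intr_eq0 (negbTE D0).
exists mt => //; exists (g%:~R^-1 * D%:~R).
  by rewrite mulf_neq0 ?invr_eq0 ?intr_eq0.
by rewrite -scalerA -zE mtE map_mxZ scalerA mulVf ?scale1r ?intr_eq0.
Qed.

End PrimitiveVectors.

Section TropicalMinimum.
Variables (R : realType) (n m : nat) (v : 'I_m -> 'rV[int]_n) (lam : 'I_m -> R).

Definition strict_argmin (mm : 'rV[int]_n) (u : 'rV[R]_n) (j0 : 'I_m) : Prop :=
  dotZ mm (v j0) != 0 /\
  forall i, dotZ mm (v i) != 0 -> i != j0 -> ell v lam j0 u < ell v lam i u.

Lemma notin_Trop_neq0 mm u : ~ inTrop v lam mm u -> mm != 0.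
Proof. by move=> Hu; apply/eqP => mm0; apply: Hu; rewrite /inTrop mm0 eqxx. Qed.

Lemma strict_argmin_notin_Trop mm u j0 : strict_argmin mm u j0 -> ~ inTrop v lam mm u.
Proof.
move=> [j0mm j0min]; rewrite /inTrop.
have mm0 : mm != 0.
  by apply: contraNneq j0mm => ->; rewrite /dotZ big1 // => i _; rewrite mxE mul0r.
rewrite (negbTE mm0) => -[j [k [jk jmm kmm jk_eq jmin]]].
have le_j := jmin j0 j0mm.
case: (eqVneq j j0) => [jj0 | jj0]; last by move: (j0min j jmm jj0); rewrite ltNge le_j.
by move: (j0min k kmm); rewrite -jj0 eq_sym jk -jk_eq ltxx => /(_ isT).
Qed.

Lemma notin_Trop_strict_argmin mm u :
  ~ inTrop v lam mm u -> (exists j, dotZ mm (v j) != 0) -> exists j0, strict_argmin mm u j0.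
Proof.
move=> Hu [j jmm]; have mm0 := notin_Trop_neq0 Hu.
have [j0 j0mm j0min] := arg_minP (P := fun i => dotZ mm (v i) != 0) (ell v lam ^~ u) jmm.
exists j0; split => // i imm ij0; rewrite lt_neqAle j0min // andbT.
apply/negP => /eqP ell_eq; apply: Hu; rewrite /inTrop (negbTE mm0).
by exists j0, i; split; rewrite // eq_sym.
Qed.

End TropicalMinimum.

Section RationalNormals.
Variables (n m : nat) (v : 'I_m -> 'rV[int]_n).

Definition rat_normal_mx : 'M[rat]_(m, n) := \matrix_(j, i) (v j 0 i)%:~R.

Lemma normal_mx_ratr (R : realType) : normal_mx R v = map_mx ratr rat_normal_mx.
Proof. by apply/matrixP => j i; rewrite !mxE ratr_int. Qed.

Lemma mxrank_normal_mx (R : realType) : \rank (normal_mx R v) = \rank rat_normal_mx.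
Proof. by rewrite normal_mx_ratr mxrank_map. Qed.

Lemma mxrank_normal_span (R : realType) (J : {set 'I_m}) :
  \rank (normal_span R v J) = \rank (row_span rat_normal_mx J).
Proof.
by rewrite [normal_span R v J]/(row_span _ J) normal_mx_ratr -map_row_span mxrank_map.
Qed.

Lemma dotZ_eq0_sub_kermx (a : 'rV[int]_n) j :
  (dotZ a (v j) == 0) = (row j rat_normal_mx <= kermx (map_mx intr a)^T)%MS.
Proof.
rewrite sub_kermx_trP mxE -(intr_eq0 rat) /dotZ rmorph_sum.
by congr (_ == 0); apply: eq_bigr => i _; rewrite !mxE rmorphM mulrC.
Qed.

Lemma exists_dotZ_neq0 (a : 'rV[int]_n) :
  \rank rat_normal_mx = n -> a != 0 -> exists j, dotZ a (v j) != 0.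
Proof.
move=> rankN a0; have /row_subPn[j] : ~~ (rat_normal_mx <= kermx (map_mx intr a)^T)%MS.
  apply: contra a0 => /(full_rank_sub_kermx_tr rankN)/rowP a0.
  by apply/eqP/rowP => i; move: (a0 i); rewrite !mxE => /eqP; rewrite intr_eq0 => /eqP.
by rewrite -dotZ_eq0_sub_kermx; exists j.
Qed.

End RationalNormals.

Unset Implicit Arguments.
Set Strict Implicit.

Theorem lemma6p4 (R : realType) (n m : nat)
  (v : 'I_m -> 'rV[int]_n) (lam : 'I_m -> R)
  (Hprim : forall j, primitive (v j))
  (Hbounded : exists M : R, forall u, inP v lam u -> forall i, `|u 0 i| <= M)
  (Hfull : exists u0, forall j, 0 < ell v lam j u0)
  (Hnonred : forall j, exists w, [/\ inP v lam w, ell v lam j w = 0 &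
                                   forall k, k != j -> 0 < ell v lam k w])
  (u : 'rV[R]_n) (mm : 'rV[int]_n) (Hu : ~ inTrop v lam mm u) :
  exists mt : 'rV[int]_n,
    [/\ primitive mt,
        exists J : {set 'I_m},
          \rank (normal_span R v J) = n.-1 /\
          (forall j, j \in J -> dotZ mt (v j) = 0)
      & ~ inTrop v lam mt u].
Proof.
have [u0 Pu0] := Hfull; pose N := rat_normal_mx v.
have rankN : \rank N = n.
  by rewrite -(mxrank_normal_mx v R) (rank_normal_mx Hbounded (u0 := u0)) // => j; apply/ltW.
have [j0 [j0mm j0min]] : exists j0, strict_argmin v lam mm u j0.
  exact/(notin_Trop_strict_argmin Hu)/exists_dotZ_neq0/(notin_Trop_neq0 Hu).
pose T := [set j | ell v lam j u <= ell v lam j0 u & j != j0].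
have Tmm : (row_span N T <= kermx (map_mx intr mm)^T)%MS.
  apply/row_span_subP => j; rewrite inE -dotZ_eq0_sub_kermx => /andP[le_j jj0].
  by apply: contraTT le_j; rewrite -ltNge => /j0min; apply.
have j0T : ~~ (row j0 N <= row_span N T)%MS.
  by apply: contra j0mm => /submx_trans/(_ Tmm); rewrite -dotZ_eq0_sub_kermx.
have [J [TJ rankJ j0J]] := extend_to_hyperplane rankN j0T.
have [w Jw j0w] := hyperplane_normal rankJ j0J.
have w0 : w != 0 by apply: contraNneq j0w => ->; rewrite sub_kermx trmx0 mulmx0.
have [mt mtP [c c0 mtE]] := exists_primitive_multiple w0.
have mt_orth j : (dotZ mt (v j) == 0) = (row j N <= kermx w^T)%MS.
  by rewrite dotZ_eq0_sub_kermx mtE sub_kermx_trZ.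
exists mt; split => //.
  exists J; split; first by rewrite mxrank_normal_span.
  by move=> j jJ; apply/eqP; rewrite mt_orth (submx_trans (row_sub_span N jJ) Jw).
apply: (strict_argmin_notin_Trop (j0 := j0)); split; first by rewrite mt_orth.
move=> i imt ij0; rewrite ltNge; apply: contra imt => le_i.
by rewrite mt_orth (submx_trans (row_sub_span N (subsetP TJ i _)) Jw) // inE le_i ij0.
Qed.
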